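(* For every integer $n \geq 1$, $$\sum_{\pi \vdash n} t(\pi) = \sum_{\pi \in V} (-1)^{h(\pi)}\, p(n - |\pi|).$$
   Context: $p(m)$ is the number of partitions of $m$, with $p(0)=1$ and $p(m)=0$ for $m<0$; $|\pi|$ is the sum of the parts of $\pi$. For a partition $\pi$, $f_i$ denotes the number of times $i$ appears as a part, and $t(\pi)$ is the nonnegative integer such that $f_i$ is odd for all $1 \leq i \leq t(\pi)$ and $f_{t(\pi)+1}$ is even (possibly zero). A $C$-partition is a partition $\pi$ such that whenever $i$ is a part of $\pi$, every positive integer less than $i$ is also a part of $\pi$. $V$ is the set of all nonempty $C$-partitions. For a partition $\pi$, $h(\pi)$ is the number of distinct part sizes of $\pi$ that occur with an even (positive) frequency. *)

(* Partitions are represented as nonincreasing sequences of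
   positive naturals (the parts). *)
From mathcomp Require Import all_boot all_algebra.
Set Implicit Arguments. Unset Strict Implicit. Unset Printing Implicit Defensive.

Definition is_partition (s : seq nat) : bool :=
  sorted geq s && all (fun x => 0 < x) s.

Definition psize (s : seq nat) : nat := sumn s.

Definition mult (s : seq nat) (i : nat) : nat := count_mem i s.

(* Every partition of m
   has at most m parts, each at most m, so it is obtained from some m-tuple with
   entries in {0..m} by deleting the zeros. *)
Definition partitions (m : nat) : seq (seq nat) :=
  [seq s <- undup [seq [seq x <- map (@nat_of_ord m.+1) (tval t) | 0 < x]
                  | t : m.-tuple 'I_m.+1]
   | is_partition s && (psize s == m)].

Definition npart (m : nat) : nat := size (partitions m).

(* t(pi): the least k >= 0 such that f_{k+1} is even; then f_i is odd for all
   1 <= i <= k.  The search range 0..|pi| suffices since f_{|pi|+1} = 0. *)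
Definition tpi (s : seq nat) : nat :=
  find (fun k => ~~ odd (mult s k.+1)) (iota 0 (psize s).+1).

Definition is_Cpartition (s : seq nat) : bool :=
  all (fun i => all (fun j => j \in s) (iota 1 i.-1)) s.

Definition hpi (s : seq nat) : nat :=
  count (fun i => ~~ odd (mult s i)) (undup s).

From mathcomp Require Import all_boot all_algebra.
From mathcomp Require Import zify.
Import GRing.Theory.

(* If a weight W i f is attached to each part size i occurring with multiplicity
   f, then summing the products of the weights over the partitions of m gives the
   coefficient of x^m in prod_i (sum_f W i f x^(i f)).  Now
   t(pi) = sum_(k >= 1) [f_1, ..., f_k all odd], and [f odd] is the partial sum
   sum_(1 <= g <= f) (-1)^(g+1); since multiplying by 1/(1 - x^i) takes partial
   sums, the k-th term has generating function
   (prod_i 1/(1 - x^i)) * prod_(i <= k) sum_(g >= 1) (-1)^(g+1) x^(i g).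
   The second factor sums (-1)^h(sigma) over the partitions sigma whose parts are
   exactly 1, ..., k, i.e. over the C-partitions with largest part k; comparing
   coefficients of x^n gives the identity. *)

Set Implicit Arguments.
Unset Strict Implicit.

Lemma leq_mem_sumn (s : seq nat) x : x \in s -> x <= sumn s.
Proof.
elim: s => //= y s IH; rewrite inE => /predU1P[->|/IH]; first exact: leq_addr.
by move/leq_trans; apply; apply: leq_addl.
Qed.

Lemma leq_size_sumn (s : seq nat) : all (fun x => 0 < x) s -> size s <= sumn s.
Proof. by elim: s => //= y s IH /andP[y0 /IH]; rewrite -add1n; apply: leq_add. Qed.

Lemma index_iota0 n : index_iota 0 n = iota 0 n.
Proof. by rewrite /index_iota subn0. Qed.

Lemma mem_partitions m s :
  (s \in partitions m) = is_partition s && (psize s == m).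
Proof.
rewrite /partitions mem_filter; apply/idP/idP; first by case/andP.
move=> /andP[ps /eqP sm]; rewrite ps sm eqxx /= mem_undup.
have pos : all (fun x => 0 < x) s by case/andP: ps.
have size_s : size s <= m by rewrite -sm; apply: leq_size_sumn.
have nth_s i : nth 0 s i < m.+1.
  rewrite ltnS; case: (ltnP i (size s)) => hi; last by rewrite nth_default.
  by rewrite -sm; apply/leq_mem_sumn/mem_nth.
(* pad s with zeros to an m-tuple of entries in 'I_m.+1 *)
pose t := mktuple (fun i : 'I_m => (inord (nth 0 s i) : 'I_m.+1)).
have -> : s = [seq x <- map (@nat_of_ord m.+1) (tval t) | 0 < x].
  rewrite /t /= -map_comp (eq_map (g := nth 0 s \o val)); last first.
    by move=> i /=; rewrite inordK.
  rewrite map_comp val_enum_ord -(subnKC size_s) iotaD map_cat filter_cat.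
  rewrite -/(mkseq _ _) mkseq_nth (all_filterP pos).
  rewrite (eq_in_filter (a2 := pred0)) ?filter_pred0 ?cats0 //.
  by move=> x /mapP[i]; rewrite mem_iota => /andP[hi _] ->; rewrite nth_default.
by apply: map_f; rewrite mem_enum.
Qed.

Lemma uniq_partitions m : uniq (partitions m).
Proof. by rewrite filter_uniq // undup_uniq. Qed.

Fixpoint bounded_partitions (K m : nat) : seq (seq nat) :=
  if K is K'.+1 then
    [seq nseq ((m - r) %/ K'.+1) K'.+1 ++ s
       | r <- [seq r <- iota 0 m.+1 | K'.+1 %| m - r], s <- bounded_partitions K' r]
  else if m == 0 then [:: [::]] else [::].

Lemma count_mem_nseq_cat c j s : all (fun x => x < c) s ->
  count_mem c (nseq j c ++ s) = j.
Proof.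
move=> lt_s; rewrite count_cat count_nseq /= eqxx mul1n (count_memPn _) ?addn0 //.
by apply/negP => /(allP lt_s); rewrite ltnn.
Qed.

Lemma filter_lt_nseq_cat c j s : all (fun x => x < c) s ->
  [seq x <- nseq j c ++ s | x < c] = s.
Proof.
move=> lt_s; rewrite filter_cat (all_filterP lt_s).
by rewrite (eq_in_filter (a2 := pred0)) ?filter_pred0 // => x /nseqP[-> _]; rewrite ltnn.
Qed.

Lemma sorted_geq_split c s : sorted geq s -> all (fun x => x <= c) s ->
  s = nseq (count_mem c s) c ++ [seq x <- s | x < c].
Proof.
elim: s => //= x s IH sorted_xs /andP[xc le_s].
case: (ltngtP x c) => [xc'|cx|->]; last by rewrite /= -IH ?(path_sorted sorted_xs).
  have lt_s : all (fun y => y < c) s.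
    apply: sub_all (order_path_min (rev_trans leq_trans) sorted_xs) => y /= yx.
    exact: leq_ltn_trans yx xc'.
  rewrite add0n (all_filterP lt_s) (count_memPn _) //.
  by apply/negP => /(allP lt_s); rewrite ltnn.
by move: xc; rewrite leqNgt cx.
Qed.

Lemma sorted_geq_nseq_cat j c s : sorted geq s -> all (fun x => x <= c) s ->
  sorted geq (nseq j c ++ s).
Proof.
move=> sorted_s le_s; elim: j => //= j IH.
by rewrite (path_sortedE (rev_trans leq_trans)) IH all_cat le_s all_nseq /= leqnn orbT.
Qed.

Lemma mem_bounded_partitions K m s : (s \in bounded_partitions K m) =
  [&& is_partition s, sumn s == m & all (fun x => x <= K) s].
Proof.
elim: K m s => [|K IH] m s.
  by case: s => [|[|x] s]; case: m => [|m]; rewrite /is_partition /= ?inE ?andbF.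
apply/allpairsPdep/idP.
  case=> r [s' [+ + ->]]; rewrite mem_filter mem_iota /= add0n ltnS => /andP[dvd rm].
  rewrite IH => /and3P[/andP[sorted_s' pos] /eqP sum_s' le_s'].
  have le_s'K : all (fun x => x <= K.+1) s' by apply: sub_all le_s' => x /= /leqW.
  rewrite /is_partition sorted_geq_nseq_cat // !all_cat sumn_cat sumn_nseq sum_s'.
  by rewrite mulnC divnK // subnK // pos le_s'K eqxx !all_nseq /= leqnn !orbT.
case/and3P=> /andP[sorted_s pos] /eqP <- le_s.
set s' := [seq x <- s | x < K.+1].
have def_s := sorted_geq_split sorted_s le_s; rewrite -/s' in def_s.
have sum_s : sumn s = K.+1 * count_mem K.+1 s + sumn s'.
  by rewrite {1}def_s sumn_cat sumn_nseq mulnC.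
exists (sumn s'), s'; split => //.
- by rewrite mem_filter mem_iota /= sum_s addnK dvdn_mulr //= ltnS leq_addl.
- rewrite IH eqxx /is_partition (sorted_filter (rev_trans leq_trans)) //= !all_filter.
  by apply/andP; split; apply/allP => x xs; apply/implyP => //; rewrite (allP pos).
- by rewrite sum_s addnK mulKn.
Qed.

Lemma uniq_bounded_partitions K m : uniq (bounded_partitions K m).
Proof.
elim: K m => [|K IH] m; first by case: m.
apply: allpairs_uniq_dep => [|r _|]; rewrite ?filter_uniq ?iota_uniq //.
move=> _ _ /allpairsPdep[r1 [s1 [_ + ->]]] /allpairsPdep[r2 [s2 [_ + ->]]] /=.
rewrite !mem_bounded_partitions => /and3P[_ /eqP sum1 le1] /and3P[_ /eqP sum2 le2] eq12.
have lt1 : all (fun x => x < K.+1) s1 by apply: sub_all le1.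
have lt2 : all (fun x => x < K.+1) s2 by apply: sub_all le2.
have eq_s : s1 = s2.
  by rewrite -(filter_lt_nseq_cat ((m - r1) %/ K.+1) lt1) eq12 filter_lt_nseq_cat.
by rewrite -sum1 -sum2 eq_s.
Qed.

Lemma perm_bounded_partitions K m :
  perm_eq (bounded_partitions K m) [seq s <- partitions m | all (fun x => x <= K) s].
Proof.
apply: uniq_perm; first exact: uniq_bounded_partitions.
  by apply: filter_uniq; apply: uniq_partitions.
move=> s; rewrite mem_bounded_partitions mem_filter mem_partitions.
by case: (all _ s); rewrite ?andbT ?andbF.
Qed.

Local Open Scope ring_scope.

Definition mult_weight (W : nat -> nat -> int) (K : nat) (s : seq nat) : int :=
  \prod_(i < K) W i.+1 (mult s i.+1).

Lemma mult_weight_nseq_cat W K j s : all (fun x => x <= K)%N s ->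
  mult_weight W K.+1 (nseq j K.+1 ++ s) = mult_weight W K s * W K.+1 j.
Proof.
move=> le_s; have lt_s : all (fun x => x < K.+1)%N s by [].
rewrite /mult_weight big_ord_recr /mult count_mem_nseq_cat //; congr (_ * _).
apply: eq_bigr => i _; rewrite count_cat count_nseq /= eqSS.
by rewrite eq_sym (ltn_eqF (ltn_ord i)).
Qed.

Definition unit_weight : nat -> nat -> int := fun _ _ => 1.

Section GeneratingPolynomial.

Variable N : nat.

Definition weight_poly (W : nat -> nat -> int) (i : nat) : {poly int} :=
  \poly_(j < N.+1) W i j.

Definition part_poly (W : nat -> nat -> int) (i : nat) : {poly int} :=
  weight_poly W i \Po 'X^i.

Definition genpoly (W : nat -> nat -> int) (K : nat) : {poly int} :=
  \prod_(i < K) part_poly W i.+1.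

Lemma coef_part_poly W c k : (0 < c)%N -> (k <= N)%N ->
  (part_poly W c)`_k = if (c %| k)%N then W c (k %/ c)%N else 0.
Proof.
move=> c_gt0 kN; rewrite coef_comp_poly_Xn //; case: ifP => // _.
by rewrite coef_poly ltnS (leq_trans (leq_div _ _) kN).
Qed.

Lemma coef_genpoly_bounded W K m : (m <= N)%N ->
  \sum_(s <- bounded_partitions K m) mult_weight W K s = (genpoly W K)`_m.
Proof.
elim: K m => [|K IH] m mN.
  rewrite /genpoly big_ord0 coef1; case: m {mN} => [|m] /=.
    by rewrite big_seq1 /mult_weight big_ord0.
  by rewrite big_nil.
rewrite /genpoly big_ord_recr -/(genpoly W K) coefM.
rewrite -(big_mkord xpredT (fun r => (genpoly W K)`_r * _`_(m - r))) index_iota0.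
rewrite big_allpairs_dep big_filter big_mkcond.
apply: eq_big_seq => r; rewrite mem_iota add0n ltnS => /andP[_ rm].
rewrite coef_part_poly ?(leq_trans (leq_subr _ _) mN) //.
case: ifP => dvd; last by rewrite mulr0.
rewrite -IH ?(leq_trans rm mN) // big_distrl /=.
by apply: eq_big_seq => s; rewrite mem_bounded_partitions => /and3P[_ _ le_s];
  rewrite mult_weight_nseq_cat.
Qed.

Lemma coef_genpoly W m : (m <= N)%N ->
  \sum_(s <- partitions m) mult_weight W N s = (genpoly W N)`_m.
Proof.
move=> mN; rewrite -coef_genpoly_bounded // (perm_big _ (perm_bounded_partitions N m)).
rewrite (all_filterP _) //; apply/allP => s; rewrite mem_partitions.
case/andP=> /andP[_ pos] /eqP sm; apply/allP => x xs.
by rewrite (leq_trans _ mN) // -sm leq_mem_sumn.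
Qed.

Lemma npart_genpoly m : (m <= N)%N -> (npart m)%:Z = (genpoly unit_weight N)`_m.
Proof.
move=> mN; rewrite -coef_genpoly // /mult_weight /unit_weight.
rewrite /npart -sum1_size (big_morph Posz PoszD (erefl _)).
by apply: eq_bigr => s _; rewrite big1.
Qed.

Definition coef_eq_upto (A B : {poly int}) := forall k, (k <= N)%N -> A`_k = B`_k.

Lemma coef_eq_uptoM A B C D :
  coef_eq_upto A B -> coef_eq_upto C D -> coef_eq_upto (A * C) (B * D).
Proof.
move=> eqAB eqCD k kN; rewrite !coefM; apply: eq_bigr => j _.
have jk : (j <= k)%N by rewrite -ltnS.
by rewrite eqAB ?eqCD ?(leq_trans jk kN) ?(leq_trans (leq_subr _ _) kN).
Qed.

Lemma coef_eq_upto_prod K (F G : nat -> {poly int}) :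
  (forall i, coef_eq_upto (F i) (G i)) ->
  coef_eq_upto (\prod_(i < K) F i) (\prod_(i < K) G i).
Proof.
move=> eqFG; elim: K => [|K IH]; first by rewrite !big_ord0.
by rewrite !big_ord_recr; apply: coef_eq_uptoM.
Qed.

Lemma coef_eq_upto_comp c A B : (0 < c)%N -> coef_eq_upto A B ->
  coef_eq_upto (A \Po 'X^c) (B \Po 'X^c).
Proof.
move=> c_gt0 eqAB k kN; rewrite !coef_comp_poly_Xn //; case: ifP => // _.
by rewrite eqAB // (leq_trans (leq_div _ _) kN).
Qed.

Section PartialSums.

Variables U V : nat -> nat -> int.
Hypothesis V_partial_sums : forall i j, \sum_(g < j.+1) U i g = V i j.

(* Multiplying by [1 + x + x^2 + ...] takes partial sums of coefficients. *)
Lemma weight_poly_partial_sums i :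
  coef_eq_upto (weight_poly U i * weight_poly unit_weight i) (weight_poly V i).
Proof.
move=> k kN; rewrite coefM coef_poly ltnS kN -V_partial_sums; apply: eq_bigr => j _.
have jk : (j <= k)%N by rewrite -ltnS.
rewrite !coef_poly !ltnS (leq_trans jk kN) (leq_trans (leq_subr _ _) kN).
by rewrite /unit_weight mulr1.
Qed.

Lemma genpoly_partial_sums :
  \sum_(m < N.+1) (genpoly U N)`_m * (genpoly unit_weight N)`_(N - m) =
  (genpoly V N)`_N.
Proof.
rewrite -coefM /genpoly -big_split /=.
apply: (@coef_eq_upto_prod N (fun i => part_poly U i.+1 * part_poly unit_weight i.+1)
  (fun i => part_poly V i.+1)) => // i.
by rewrite -comp_polyM; apply/coef_eq_upto_comp/weight_poly_partial_sums.
Qed.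

End PartialSums.

End GeneratingPolynomial.

Definition odd_upto (k i f : nat) : int := ((i <= k)%N ==> odd f)%:R.
Definition parts_upto (k i g : nat) : int := ((i <= k)%N == (0 < g)%N)%:R.
Definition even_sign (g : nat) : int := (-1) ^+ ((0 < g)%N && ~~ odd g).
Definition signed_parts_upto (k i g : nat) : int := parts_upto k i g * even_sign g.

Lemma sum_signed_parts_upto k i f :
  \sum_(g < f.+1) signed_parts_upto k i g = odd_upto k i f.
Proof.
rewrite /signed_parts_upto /parts_upto /odd_upto /even_sign.
case: (leqP i k) => _ /=; last first.
  by rewrite big_ord_recl big1 ?addr0 // => g _; rewrite mul0r.
elim: f => [|f IH]; first by rewrite big_ord1.
by rewrite big_ord_recr IH /=; case: (odd f).
Qed.

Lemma prod_natr_bool (R : pzSemiRingType) (T : Type) (r : seq T) (b : pred T) :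
  \prod_(x <- r) ((b x)%:R : R) = (all b r)%:R.
Proof.
elim: r => [|x r IH]; first by rewrite big_nil.
by rewrite big_cons IH /= -natrM mulnb.
Qed.

Lemma find_iota_sum (p : pred nat) n :
  find p (iota 0 n) = (\sum_(k < n) all (predC p) (iota 0 k.+1))%N.
Proof.
elim: n p => [|n IH] p; first by rewrite big_ord0.
rewrite big_ord_recl /= (iotaDl 1 0) find_map IH /= andbT.
case: (p 0) => /=; first by rewrite big1.
by rewrite add1n; congr _.+1; apply: eq_bigr => k _; rewrite add0n (iotaDl 1 1) all_map.
Qed.

Lemma mult_gt0 s x : (0 < mult s x)%N = (x \in s).
Proof. by rewrite /mult -has_count has_pred1. Qed.

Lemma mult_weight_odd_upto n k s : (k <= n)%N ->
  mult_weight (odd_upto k) n s = (all (fun i => odd (mult s i.+1)) (iota 0 k))%:R.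
Proof.
move=> kn; rewrite -index_iota0 -prod_natr_bool (big_nat_widen _ _ _ _ _ kn).
rewrite big_mkcond big_mkord /mult_weight /odd_upto.
by apply: eq_bigr => i _; case: (i < k)%N.
Qed.

Lemma tpi_mult_weight n s : s \in partitions n ->
  (tpi s)%:Z = \sum_(k < n) mult_weight (odd_upto k.+1) n s.
Proof.
rewrite mem_partitions => /andP[_ /eqP sum_s].
have n1_notin_s : n.+1 \notin s.
  by apply: contraL (ltnSn n); rewrite -leqNgt => /leq_mem_sumn; rewrite -sum_s.
rewrite /tpi sum_s find_iota_sum (big_morph Posz PoszD (erefl _)) big_ord_recr.
have -> : iota 0 n.+1 = rcons (iota 0 n) n by rewrite -cats1 -addn1 iotaD.
rewrite all_rcons /= /mult (count_memPn n1_notin_s) /= addr0.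
apply: eq_bigr => k _; rewrite mult_weight_odd_upto // natz.
by congr (Posz (nat_of_bool (_ && _))); [rewrite negbK | apply: eq_all => i /=; rewrite negbK].
Qed.

Lemma mult_weight_parts_upto n k s :
  mult_weight (parts_upto k) n s = (all (fun i => (i < k) == (i.+1 \in s)) (iota 0 n))%N%:R.
Proof.
rewrite -prod_natr_bool -index_iota0 big_mkord /mult_weight /parts_upto.
by apply: eq_bigr => i _; rewrite mult_gt0.
Qed.

Lemma leq_head_partition x s y : is_partition (x :: s) -> y \in x :: s -> (y <= x)%N.
Proof.
case/andP=> sorted_xs _; rewrite inE => /predU1P[-> //|ys].
exact: (allP (order_path_min (rev_trans leq_trans) sorted_xs)).
Qed.

Lemma is_CpartitionE x s n : is_partition (x :: s) -> (x <= n)%N ->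
  is_Cpartition (x :: s) = all (fun i => (i < x) == (i.+1 \in x :: s))%N (iota 0 n).
Proof.
move=> part_xs xn; have le_x := leq_head_partition part_xs.
apply/allP/allP => [C i _ | parts y ys].
  case: (ltnP i x) => ix; last first.
    by rewrite eq_sym eqbF_neg; apply/negP => /le_x; rewrite leqNgt ltnS ix.
  rewrite eq_sym eqb_id; case: (eqVneq i.+1 x) => [-> | ne_ix]; first exact: mem_head.
  by apply: (allP (C x (mem_head x s))); rewrite mem_iota; lia.
apply/allP => j; rewrite mem_iota => /andP[j_gt0 jy].
have y_le_x := le_x _ ys.
have := parts j.-1; rewrite mem_iota prednK //= => /(_ _)/eqP <-; first lia.
lia.
Qed.

Lemma parts_upto_head k x s n : is_partition (x :: s) -> (x <= n)%N -> (k < n)%N ->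
  all (fun i => (i < k.+1) == (i.+1 \in x :: s))%N (iota 0 n) -> k.+1 = x.
Proof.
move=> part_xs xn kn /allP parts; have le_x := leq_head_partition part_xs.
have x_gt0 : (0 < x)%N by case/andP: part_xs => _ /andP[].
apply/eqP; rewrite eqn_leq; apply/andP; split.
  by apply: le_x; have := parts k; rewrite mem_iota kn ltnSn => /(_ isT)/eqP <-.
have := parts x.-1; rewrite mem_iota prednK ?mem_head //= => /(_ _)/eqP; lia.
Qed.

Lemma sum_parts_upto n s : is_partition s -> s != [::] -> (sumn s <= n)%N ->
  \sum_(k < n) mult_weight (parts_upto k.+1) n s = (is_Cpartition s)%:R.
Proof.
case: s => [//|x s] part_xs _ sum_n.
have xn : (x <= n)%N := leq_trans (leq_mem_sumn (mem_head x s)) sum_n.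
have x_gt0 : (0 < x)%N by case/andP: part_xs => _ /andP[].
have xpn : (x.-1 < n)%N by rewrite prednK.
under eq_bigr do rewrite mult_weight_parts_upto.
rewrite (bigD1 (Ordinal xpn)) //= big1 ?addr0 => [|k /eqP ne_k]; last first.
  case: allP => // /allP /(parts_upto_head part_xs xn (ltn_ord k)) eq_kx.
  by case: ne_k; apply: val_inj; rewrite /= -eq_kx.
by rewrite prednK // (is_CpartitionE part_xs xn).
Qed.

Lemma prod_even_sign n s : all (fun x => 0 < x)%N s -> (sumn s <= n)%N ->
  \prod_(i < n) even_sign (mult s i.+1) = (-1) ^+ hpi s.
Proof.
move=> pos sum_n; rewrite /even_sign prodrXr /hpi; congr (_ ^+ _).
have perm_undup : perm_eq (undup s) [seq i <- iota 1 n | i \in s].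
  apply: uniq_perm; rewrite ?undup_uniq ?filter_uniq ?iota_uniq // => x.
  rewrite mem_undup mem_filter mem_iota; case xs: (x \in s) => //=.
  by rewrite (allP pos) // add1n ltnS (leq_trans (leq_mem_sumn xs) sum_n).
rewrite (permP perm_undup) count_filter -sumn_count sumnE big_map.
rewrite (iotaDl 1 0) big_map -index_iota0 big_mkord.
by apply: eq_bigr => i _; rewrite mult_gt0 andbC.
Qed.

Lemma sum_Cpartition_sign n m : (0 < m)%N -> (m <= n)%N ->
  \sum_(s <- partitions m | is_Cpartition s) (-1) ^+ hpi s =
  \sum_(k < n) (genpoly n (signed_parts_upto k.+1) n)`_m.
Proof.
move=> m_gt0 mn; under [RHS]eq_bigr do rewrite -coef_genpoly //.
rewrite exchange_big big_mkcond /=; apply: eq_big_seq => s.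
rewrite mem_partitions => /andP[part_s /eqP sum_s].
have s_nil : s != [::] by apply: contraTneq m_gt0 => s_nil; rewrite -sum_s s_nil.
have sum_n : (sumn s <= n)%N by rewrite /psize in sum_s; rewrite sum_s.
under eq_bigr do rewrite /mult_weight /signed_parts_upto big_split -/(mult_weight _ _ _).
rewrite -mulr_suml sum_parts_upto // prod_even_sign //; last by case/andP: part_s.
by case: is_Cpartition; rewrite ?mul1r ?mul0r.
Qed.

Lemma coef0_genpoly_signed_parts_upto n k : (0 < n)%N ->
  (genpoly n (signed_parts_upto k.+1) n)`_0 = 0.
Proof.
move=> n_gt0; rewrite -coef_genpoly // big1_seq // => s /andP[_].
rewrite mem_partitions => /andP[_ /eqP sum_s].
have one_notin_s : 1%N \notin s by apply/negP => /leq_mem_sumn; rewrite -/(psize s) sum_s.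
case: n n_gt0 => // n _; rewrite /mult_weight big_ord_recl /signed_parts_upto /parts_upto.
by rewrite /mult (count_memPn one_notin_s) !mul0r.
Qed.

Unset Implicit Arguments.

Theorem mainTheorem5 (n : nat) (hn : (1 <= n)%N) :
  ((\sum_(s <- partitions n) tpi s)%N)%:Z =
  \sum_(1 <= m < n.+1)
     \sum_(s <- partitions m | is_Cpartition s)
        (-1) ^+ hpi s * (npart (n - m))%:Z.
Proof.
have -> : ((\sum_(s <- partitions n) tpi s)%N)%:Z =
    \sum_(k < n) (genpoly n (odd_upto k.+1) n)`_n.
  rewrite (big_morph Posz PoszD (erefl _)) (eq_big_seq _ (@tpi_mult_weight n)).
  by rewrite exchange_big; apply: eq_bigr => k _; rewrite coef_genpoly.
have -> : \sum_(1 <= m < n.+1) \sum_(s <- partitions m | is_Cpartition s)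
      (-1) ^+ hpi s * (npart (n - m))%:Z =
    \sum_(k < n) \sum_(1 <= m < n.+1)
      (genpoly n (signed_parts_upto k.+1) n)`_m * (genpoly n unit_weight n)`_(n - m).
  rewrite exchange_big; apply: eq_big_nat => m /andP[m_gt0 mn].
  by rewrite -mulr_suml (sum_Cpartition_sign m_gt0 mn) mulr_suml (npart_genpoly (leq_subr m n)).
apply: eq_bigr => k _.
rewrite -(genpoly_partial_sums n (sum_signed_parts_upto k.+1)) big_ord_recl.
by rewrite coef0_genpoly_signed_parts_upto // mul0r add0r big_add1 big_mkord.
Qed.
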